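(* Let $f$ be a function, $x^\star$ one of its global optima with associated $(\nu,\rho)$, let $C>1$, and let $d=d(\nu,C,\rho)>0$. Set \[ \tilde n=\Big\lfloor \frac{n}{\bar\log n}\Big\rfloor\,\frac{d\log(1/\rho)}{C}, \] and assume $\tilde n>e$. Then after a run of \texttt{SequOOL} with budget $n$ (deterministic feedback), the simple regret satisfies \[ r_n\le \nu\Big(\frac{\tilde n}{\log \tilde n}\Big)^{-1/d}. \]
   Context: Let $\mathcal X$ be a set and $f:\mathcal X\to\mathbb R$ a function attaining its supremum; a point $x^\star$ with $f(x^\star)=\sup_{x\in\mathcal X}f(x)$ is a global optimum. Hierarchical partitioning $\mathcal P=\{\mathcal P_{h,i}\}$: - for every depth $h\ge 0$, the cells $\{\mathcal P_{h,i}\}_{1\le i\le I_h}$ form a partition of $\mathcal X$, and $\mathcal P_{0,1}=\mathcal X$; - each cell $\mathcal P_{h,i}$ is partitioned into finitely many children cells of depth $h+1$; - each cell has a fixed representative point $x_{h,i}\in\mathcal P_{h,i}$, and we write $f_{h,i}=f(x_{h,i})$; - for a global optimum $x^\star$, $i^\star_h$ is the index of the unique depth-$h$ cell containing $x^\star$. Local smoothness: a global optimum $x^\star$ has associated $(\nu,\rho)$, with $\nu>0$ and $\rho\in(0,1)$, if for all $h\in\mathbb N$ and all $x\in\mathcal P_{h,i^\star_h}$ we have $f(x)\ge f(x^\star)-\nu\rho^h$. Near-optimality dimension: for $\nu>0$, $C>1$, $\rho\in(0,1)$, let $\mathcal N_h(\epsilon)$ be the number of depth-$h$ cells $\mathcal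 P_{h,i}$ with $\sup_{x\in\mathcal P_{h,i}}f(x)\ge f(x^\star)-\epsilon$. Define \[ d(\nu,C,\rho)=\inf\{d'\ge 0:\ \forall h\ge 0,\ \mathcal N_h(3\nu\rho^h)\le C\rho^{-d'h}\}, \] which is assumed finite. Notation: $\bar\log n=\sum_{t=1}^n 1/t$ (the $n$-th harmonic number). Simple regret: $r_n=f(x^\star)-f(x(n))$. Deterministic feedback: evaluating a cell $\mathcal P_{h,i}$ returns $f_{h,i}$ exactly. Opening a cell means evaluating each of its children cells once. \texttt{SequOOL} with budget $n$: set $h_{\max}=\lfloor n/\bar\log n\rfloor$ and open $\mathcal P_{0,1}$. Then, for $h=1,2,\dots,h_{\max}$ in increasing order, open the $\lfloor h_{\max}/h\rfloor$ depth-$h$ cells having the largest values $f_{h,j}$ among the evaluated depth-$h$ cells (or all of them if there are fewer). Finally, output $x(n)$, a representative point $x_{h,i}$ of an evaluated cell maximizing $f_{h,i}$. *)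

From Stdlib Require Import Reals Lra Lia Classical ClassicalEpsilon ClassicalDescription.
Open Scope R_scope.

(* Harmonic number  \bar\log n = sum_{t=1}^n 1/t *)
Fixpoint harmonic (n : nat) : R :=
  match n with
  | O => 0
  | S k => harmonic k + / INR (S k)
  end.

Definition nat_floor (x : R) : nat := Z.to_nat (Int_part x).

Fixpoint count_upto (P : nat -> Prop) (m : nat) : nat :=
  match m with
  | O => O
  | S k => (count_upto P k + if excluded_middle_informative (P k) then 1 else 0)%nat
  end.

(* Depth-h cells are indexed by i < I h
   (0-based; the root is cell (0,0)).  parent h j is the index of the
   depth-h cell containing the depth-(h+1) cell j; the children of (h,i)
   are the depth-(h+1) cells j with parent h j = i. *)
Record hpart (X : Type) := {
  I : nat -> nat;
  cell : nat -> nat -> X -> Prop;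
  parent : nat -> nat -> nat;
  rep : nat -> nat -> X;
  I0 : I 0%nat = 1%nat;
  part : forall h x, exists! i, (i < I h)%nat /\ cell h i x;
  parent_lt : forall h j, (j < I (S h))%nat -> (parent h j < I h)%nat;
  child_sub : forall h j x, (j < I (S h))%nat -> cell (S h) j x -> cell h (parent h j) x;
  rep_in : forall h i, (i < I h)%nat -> cell h i (rep h i)
}.
Arguments I {X}. Arguments cell {X}. Arguments parent {X}. Arguments rep {X}.

Definition global_opt {X} (f : X -> R) (xs : X) : Prop := forall x, f x <= f xs.

Definition local_smooth {X} (P : hpart X) (f : X -> R) (xs : X) (nu rho : R) : Prop :=
  forall h i x, (i < I P h)%nat -> cell P h i xs -> cell P h i x ->
    f x >= f xs - nu * rho ^ h.

Definition cell_sup_ge {X} (P : hpart X) (f : X -> R) (h i : nat) (c : R) : Prop :=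
  exists s, is_lub (fun y => exists x, cell P h i x /\ y = f x) s /\ s >= c.

Definition Ncount {X} (P : hpart X) (f : X -> R) (xs : X) (h : nat) (eps : R) : nat :=
  count_upto (fun i => cell_sup_ge P f h i (f xs - eps)) (I P h).

Definition is_inf (S : R -> Prop) (m : R) : Prop :=
  (forall y, S y -> m <= y) /\ (forall b, (forall y, S y -> b <= y) -> b <= m).

(* d = d(nu, C, rho) (in particular the defining set is nonempty, i.e. d is finite) *)
Definition near_opt_dim {X} (P : hpart X) (f : X -> R) (xs : X) (nu C rho d : R) : Prop :=
  is_inf (fun d' => 0 <= d' /\ forall h : nat,
            INR (Ncount P f xs h (3 * nu * rho ^ h)) <= C * Rpower rho (- d' * INR h)) d.

Definition hmax (n : nat) : nat := nat_floor (INR n / harmonic n).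

Definition evaluated {X} (P : hpart X) (O : nat -> nat -> Prop) (h j : nat) : Prop :=
  (1 <= h)%nat /\ (j < I P h)%nat /\ O (pred h) (parent P (pred h) j).

(* A run of SequOOL with budget n, with opened sets O h (of indices of
   depth-h cells), output xout.  Ties are broken arbitrarily. *)
Definition sequool_run {X} (P : hpart X) (f : X -> R) (n : nat)
    (O : nat -> nat -> Prop) (xout : X) : Prop :=
  (forall i, O 0%nat i <-> i = 0%nat) /\
  (forall h, (1 <= h <= hmax n)%nat ->
     (forall i, O h i -> evaluated P O h i) /\
     count_upto (O h) (I P h) =
       Nat.min (hmax n / h) (count_upto (evaluated P O h) (I P h)) /\
     (forall i j, O h i -> evaluated P O h j -> ~ O h j ->
        f (rep P h j) <= f (rep P h i))) /\
  (exists h i, (h <= S (hmax n))%nat /\ evaluated P O h i /\ xout = rep P h i /\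
     forall h' j, (h' <= S (hmax n))%nat -> evaluated P O h' j ->
       f (rep P h' j) <= f (rep P h i)).

From Stdlib Require Import Reals Lra Lia Classical ClassicalDescription Wf_nat.
Open Scope R_scope.

(* As long as [h C rho^(-d h) <= h_max], the near-optimality bound gives
   [N_h(3 nu rho^h) <= h_max / h]: at depth [h] at most [h_max / h] cells can
   beat the value [f(x_star) - nu rho^h] guaranteed at the optimal cell by local
   smoothness, so SequOOL, which opens the [h_max / h] best cells, opens the
   optimal one.  Hence the optimal cell at the first depth [h + 1] violating
   the condition is evaluated and the output is [nu rho^(h+1)]-optimal.
   Finally [(h+1) C rho^(-d(h+1)) > h_max] says that [x := rho^(-d(h+1))]
   satisfies [x ln x > nt], whence [x >= nt / ln nt]. *)

Lemma count_upto_mono (P Q : nat -> Prop) (m : nat) :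
  (forall k, (k < m)%nat -> P k -> Q k) -> (count_upto P m <= count_upto Q m)%nat.
Proof.
  induction m as [|m IH]; simpl; intros HPQ; [lia|].
  specialize (IH (fun k Hk => HPQ k ltac:(lia))).
  destruct (excluded_middle_informative (P m)) as [HP|];
    destruct (excluded_middle_informative (Q m)) as [|HQ]; try lia.
  exfalso; exact (HQ (HPQ m ltac:(lia) HP)).
Qed.

Lemma count_upto_lt (P Q : nat -> Prop) (m k0 : nat) :
  (forall k, (k < m)%nat -> P k -> Q k) -> (k0 < m)%nat -> Q k0 -> ~ P k0 ->
  (count_upto P m < count_upto Q m)%nat.
Proof.
  induction m as [|m IH]; simpl; intros HPQ Hk0 HQ0 HP0; [lia|].
  destruct (Nat.eq_dec k0 m) as [->|Hne].
  - pose proof (count_upto_mono P Q m (fun k Hk => HPQ k ltac:(lia))).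
    destruct (excluded_middle_informative (P m));
      destruct (excluded_middle_informative (Q m)); tauto || lia.
  - specialize (IH (fun k Hk => HPQ k ltac:(lia)) ltac:(lia) HQ0 HP0).
    destruct (excluded_middle_informative (P m)) as [HP|];
      destruct (excluded_middle_informative (Q m)) as [|HQ]; try lia.
    exfalso; exact (HQ (HPQ m ltac:(lia) HP)).
Qed.

Lemma nat_first_failure (Q : nat -> Prop) (m : nat) :
  Q 0%nat -> ~ Q m -> exists k, (forall j, (j <= k)%nat -> Q j) /\ ~ Q (S k).
Proof.
  intros Q0; induction m as [m IH] using lt_wf_ind; intros Hm.
  destruct (classic (exists j, (j < m)%nat /\ ~ Q j)) as [[j [Hj HQj]]|Hnone].
  - exact (IH j Hj HQj).
  - destruct m as [|k]; [contradiction|].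
    exists k; split; [|exact Hm].
    intros j Hj; apply NNPP; intros HQj; apply Hnone; exists j; split; [lia|exact HQj].
Qed.

Lemma exp_le_exp (x y : R) : x <= y -> exp x <= exp y.
Proof. intros [Hlt| ->]; [left; exact (exp_increasing _ _ Hlt)|right; reflexivity]. Qed.

Lemma ln_gt_0 (x : R) : 1 < x -> 0 < ln x.
Proof. intros Hx; rewrite <- ln_1; apply ln_increasing; lra. Qed.

Lemma ln_lt_0 (x : R) : 0 < x < 1 -> ln x < 0.
Proof. intros Hx; rewrite <- ln_1; apply ln_increasing; lra. Qed.

Lemma ln_gt_1 (t : R) : exp 1 < t -> 1 < ln t.
Proof. intros Ht; rewrite <- (ln_exp 1); apply ln_increasing; [apply exp_pos|exact Ht]. Qed.

Lemma Rpower_opp_le_base (x y e : R) :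
  0 <= e -> 0 < x <= y -> Rpower y (- e) <= Rpower x (- e).
Proof.
  intros He Hxy; rewrite !Rpower_Ropp.
  apply Rinv_le_contravar; [unfold Rpower; apply exp_pos|].
  apply Rle_Rpower_l; assumption.
Qed.

Lemma le_of_forall_le_mul_exp (N B a : R) :
  0 < B -> 0 <= a -> (forall e, 0 < e -> N <= B * exp (e * a)) -> N <= B.
Proof.
  intros HB Ha HN; apply Rnot_lt_le; intros HBN.
  destruct Ha as [Ha| <-].
  - set (r := N / B).
    assert (Hr : 1 < r).
    { unfold r, Rdiv; apply (Rmult_lt_reg_r B); [lra|].
      rewrite Rmult_assoc, Rinv_l, Rmult_1_r by lra; lra. }
    assert (Hlnr := ln_gt_0 r Hr).
    (* [exp (e a) = sqrt r < r] for this choice of [e] *)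
    specialize (HN (ln r / (2 * a)) ltac:(apply Rdiv_lt_0_compat; lra)).
    replace (ln r / (2 * a) * a) with (ln r / 2) in HN by (field; lra).
    assert (exp (ln r / 2) < r) by (rewrite <- (exp_ln r) at 2 by lra; apply exp_increasing; lra).
    assert (N = B * r) by (unfold r; field; lra).
    nra.
  - specialize (HN 1 Rlt_0_1); rewrite Rmult_0_r, exp_0 in HN; lra.
Qed.

Lemma div_ln_le_of_lt_mul_ln (t x : R) :
  exp 1 < t -> 1 < x -> t < x * ln x -> t / ln t <= x.
Proof.
  intros Ht Hx Htx; pose proof (exp_pos 1); pose proof (ln_gt_1 t Ht) as Hlnt.
  set (y := t / ln t).
  assert (Hy : 0 < y) by (unfold y; apply Rdiv_lt_0_compat; lra).
  assert (Hlny : ln y < ln t).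
  { unfold y, Rdiv; rewrite ln_mult, ln_Rinv by (try apply Rinv_0_lt_compat; lra).
    pose proof (ln_gt_0 _ Hlnt); lra. }
  assert (Hyt : y * ln t = t) by (unfold y; field; lra).
  apply Rnot_lt_le; intros Hxy.
  assert (ln x < ln y) by (apply ln_increasing; lra).
  pose proof (ln_gt_0 x Hx).
  nra.
Qed.

Lemma is_inf_approx (S : R -> Prop) (d e : R) :
  is_inf S d -> 0 < e -> exists y, S y /\ y < d + e.
Proof.
  intros [_ Hglb] He; apply NNPP; intros Hnone.
  assert (d + e <= d); [|lra].
  apply Hglb; intros y Hy; apply Rnot_lt_le; intros Hyd; eauto.
Qed.

Lemma Ncount_le_near_opt_dim {X} (P : hpart X) (f : X -> R) (xs : X) (nu C rho d : R) (h : nat) :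
  0 < rho < 1 -> 0 < C -> near_opt_dim P f xs nu C rho d ->
  INR (Ncount P f xs h (3 * nu * rho ^ h)) <= C * Rpower rho (- d * INR h).
Proof.
  intros Hrho HC Hdim.
  pose proof (pos_INR h); pose proof (ln_lt_0 rho Hrho).
  apply (le_of_forall_le_mul_exp _ _ (INR h * - ln rho)).
  - apply Rmult_lt_0_compat; [lra|apply exp_pos].
  - nra.
  - intros e He; destruct (is_inf_approx _ _ _ Hdim He) as [y [[_ Hy] Hyd]].
    eapply Rle_trans; [apply Hy|]; rewrite Rmult_assoc.
    apply Rmult_le_compat_l; [lra|].
    unfold Rpower; rewrite <- exp_plus; apply exp_le_exp.
    assert (0 <= (d + e - y) * INR h) by (apply Rmult_le_pos; lra).
    nra.
Qed.

Lemma cell_sup_ge_of_cell {X} (P : hpart X) (f : X -> R) (xs x : X) (h i : nat) (c : R) :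
  global_opt f xs -> cell P h i x -> c <= f x -> cell_sup_ge P f h i c.
Proof.
  intros Hopt Hx Hc.
  destruct (completeness (fun y => exists x, cell P h i x /\ y = f x)) as [s Hs].
  - exists (f xs); intros y [x' [_ ->]]; apply Hopt.
  - exists (f x); eauto.
  - exists s; split; [exact Hs|].
    assert (f x <= s) by (apply (proj1 Hs); eauto); lra.
Qed.

(* the condition [h C rho^(-d h) <= h_max] defining the depth [h_eps] of the paper *)
Definition depth_cost (C rho d : R) (h : nat) : R := INR h * C * Rpower rho (- d * INR h).

Lemma le_depth_cost (C rho d : R) (h : nat) :
  0 < rho < 1 -> 1 <= C -> 0 <= d -> INR h <= depth_cost C rho d h.
Proof.
  intros Hrho HC Hd; unfold depth_cost.
  pose proof (pos_INR h); pose proof (ln_lt_0 rho Hrho).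
  assert (1 <= Rpower rho (- d * INR h)).
  { unfold Rpower; rewrite <- exp_0; apply exp_le_exp.
    assert (0 <= d * INR h) by (apply Rmult_le_pos; lra); nra. }
  assert (1 <= C * Rpower rho (- d * INR h)) by nra.
  nra.
Qed.

Lemma Ncount_le_div_of_depth_cost {X} (P : hpart X) (f : X -> R) (xs : X) (nu C rho d : R) (m h : nat) :
  0 < rho < 1 -> 0 < C -> near_opt_dim P f xs nu C rho d -> (1 <= h)%nat ->
  depth_cost C rho d h <= INR m -> (Ncount P f xs h (3 * nu * rho ^ h) <= m / h)%nat.
Proof.
  intros Hrho HC Hdim Hh Hcost.
  apply Nat.div_le_lower_bound; [lia|].
  pose proof (Ncount_le_near_opt_dim P f xs nu C rho d h Hrho HC Hdim).
  unfold depth_cost in Hcost.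
  apply INR_le; rewrite mult_INR.
  assert (0 < INR h) by (apply lt_0_INR; lia).
  nra.
Qed.

Lemma pow_le_of_depth_cost_gt (C rho d t : R) (m k : nat) :
  0 < rho < 1 -> 0 < d -> 0 < C ->
  t = INR m * (d * ln (1 / rho)) / C -> exp 1 < t ->
  INR m < depth_cost C rho d k -> rho ^ k <= Rpower (t / ln t) (- (1 / d)).
Proof.
  intros Hrho Hd HC Ht Hte Hcost; unfold depth_cost in Hcost.
  assert (Hk : 0 < INR k).
  { destruct k; [simpl in Hcost; pose proof (pos_INR m); nra|apply lt_0_INR; lia]. }
  assert (Hln : ln (1 / rho) = - ln rho)
    by (unfold Rdiv; rewrite Rmult_1_l, ln_Rinv; lra).
  pose proof (ln_lt_0 rho Hrho).
  set (x := Rpower rho (- d * INR k)) in *.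
  assert (Hlnx : ln x = INR k * (d * ln (1 / rho))) by (unfold x; rewrite ln_Rpower, Hln; ring).
  assert (Hx : 1 < x).
  { unfold x, Rpower; rewrite <- exp_0; apply exp_increasing.
    assert (0 < d * INR k) by (apply Rmult_lt_0_compat; lra); nra. }
  assert (Htx : t < x * ln x).
  { rewrite Hlnx, Ht; apply (Rmult_lt_reg_r C); [lra|].
    unfold Rdiv; rewrite Rmult_assoc, Rinv_l, Rmult_1_r by lra.
    assert (0 < d * ln (1 / rho)) by (rewrite Hln; nra); nra. }
  assert (Hpow : rho ^ k = Rpower x (- (1 / d))).
  { unfold x; rewrite Rpower_mult, <- Rpower_pow by lra; f_equal; field; lra. }
  rewrite Hpow; apply Rpower_opp_le_base.
  - left; apply Rdiv_lt_0_compat; lra.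
  - split; [|exact (div_ln_le_of_lt_mul_ln t x Hte Hx Htx)].
    pose proof (exp_pos 1); pose proof (ln_gt_1 t Hte).
    apply Rdiv_lt_0_compat; lra.
Qed.

Section SequOOL.

Variables (X : Type) (P : hpart X) (f : X -> R) (xs : X) (nu rho : R)
  (n : nat) (O : nat -> nat -> Prop) (xout : X).
Hypotheses (f_opt : global_opt f xs) (nu_ge0 : 0 <= nu) (rho_ge0 : 0 <= rho)
  (smooth : local_smooth P f xs nu rho) (run : sequool_run P f n O xout).

Lemma evaluated_opt_child (h i : nat) :
  (i < I P (S h))%nat -> cell P (S h) i xs ->
  (forall j, (j < I P h)%nat -> cell P h j xs -> O h j) -> evaluated P O (S h) i.
Proof.
  intros Hi Hc Hopen; split; [lia|split; [exact Hi|]].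
  exact (Hopen _ (parent_lt _ P h i Hi) (child_sub _ P h i xs Hi Hc)).
Qed.

(* An evaluated optimal cell left unopened would make every opened cell, and
   itself, count in [N_h(3 nu rho^h)], i.e. more than [hmax n / h] cells. *)
Lemma opt_cell_opened (h i : nat) :
  (1 <= h <= hmax n)%nat -> (Ncount P f xs h (3 * nu * rho ^ h) <= hmax n / h)%nat ->
  (i < I P h)%nat -> cell P h i xs -> evaluated P O h i -> O h i.
Proof.
  intros Hh HN Hi Hc Hev.
  destruct run as [_ [Hstep _]]; destruct (Hstep h Hh) as [Hsub [Hcount Hbest]].
  apply NNPP; intros Hno.
  assert (Hsmall : 0 <= nu * rho ^ h) by (apply Rmult_le_pos; [|apply pow_le]; lra).
  pose proof (smooth h i (rep P h i) Hi Hc (rep_in _ P h i Hi)) as Hrep.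
  assert (Hcnt_ev := count_upto_lt _ _ _ i (fun k _ => Hsub k) Hi Hev Hno).
  assert (Hcnt_N : (count_upto (O h) (I P h) < Ncount P f xs h (3 * nu * rho ^ h))%nat).
  { apply (count_upto_lt _ _ _ i); [|exact Hi| |exact Hno].
    - intros k Hk Ok; apply (cell_sup_ge_of_cell P f xs (rep P h k)); [exact f_opt|apply rep_in, Hk|].
      pose proof (Hbest k i Ok Hev Hno); lra.
    - apply (cell_sup_ge_of_cell P f xs xs); [exact f_opt|exact Hc|lra]. }
  lia.
Qed.

Lemma opt_cells_opened (hb : nat) :
  (hb <= hmax n)%nat ->
  (forall h, (1 <= h <= hb)%nat -> (Ncount P f xs h (3 * nu * rho ^ h) <= hmax n / h)%nat) ->
  forall h, (h <= hb)%nat -> forall i, (i < I P h)%nat -> cell P h i xs -> O h i.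
Proof.
  intros Hhb HN h; induction h as [|h IH]; intros Hh i Hi Hc.
  - rewrite I0 in Hi; apply (proj1 run); lia.
  - apply opt_cell_opened; [lia|apply HN; lia|exact Hi|exact Hc|].
    apply evaluated_opt_child; [exact Hi|exact Hc|apply IH; lia].
Qed.

Lemma sequool_regret_le (hb : nat) :
  (hb <= hmax n)%nat ->
  (forall h, (1 <= h <= hb)%nat -> (Ncount P f xs h (3 * nu * rho ^ h) <= hmax n / h)%nat) ->
  f xs - f xout <= nu * rho ^ S hb.
Proof.
  intros Hhb HN.
  destruct (part _ P (S hb) xs) as [i [[Hi Hc] _]].
  assert (Hev : evaluated P O (S hb) i)
    by (apply evaluated_opt_child; [exact Hi|exact Hc|apply (opt_cells_opened hb); auto]).
  destruct run as [_ [_ [h0 [i0 [_ [_ [-> Hmax]]]]]]].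
  pose proof (Hmax (S hb) i ltac:(lia) Hev).
  pose proof (smooth (S hb) i (rep P (S hb) i) Hi Hc (rep_in _ P _ _ Hi)).
  lra.
Qed.

End SequOOL.

Theorem corollary3 (X : Type) (P : hpart X) (f : X -> R) (xs : X)
  (nu rho C d : R) (n : nat) (O : nat -> nat -> Prop) (xout : X) :
  global_opt f xs ->
  0 < nu -> 0 < rho < 1 -> local_smooth P f xs nu rho ->
  1 < C ->
  near_opt_dim P f xs nu C rho d -> 0 < d ->
  let nt := INR (hmax n) * (d * ln (1 / rho)) / C in
  nt > exp 1 ->
  sequool_run P f n O xout ->
  f xs - f xout <= nu * Rpower (nt / ln nt) (- (1 / d)).
Proof.
  intros Hopt Hnu Hrho Hsmooth HC Hdim Hd nt Hnt Hrun.
  set (hm := hmax n) in *.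
  pose proof (pos_INR hm).
  destruct (nat_first_failure (fun k => depth_cost C rho d k <= INR hm) (S hm))
    as [hb [Hfits Hfails]].
  - unfold depth_cost; simpl; lra.
  - pose proof (le_depth_cost C rho d (S hm) Hrho ltac:(lra) ltac:(lra)); rewrite S_INR in *; lra.
  - assert (Hhb : (hb <= hm)%nat).
    { apply INR_le; pose proof (le_depth_cost C rho d hb Hrho ltac:(lra) ltac:(lra));
        pose proof (Hfits hb (le_n _)); simpl in *; lra. }
    eapply Rle_trans.
    + apply (sequool_regret_le X P f xs nu rho n O xout Hopt ltac:(lra) ltac:(lra) Hsmooth Hrun hb Hhb).
      intros h Hh.
      apply (Ncount_le_div_of_depth_cost P f xs nu C rho d hm h Hrho ltac:(lra) Hdim);
        [lia|apply Hfits; lia].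
    + apply Rmult_le_compat_l; [lra|].
      apply (pow_le_of_depth_cost_gt C rho d nt hm); try lra; reflexivity.
Qed.
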